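(* Let $\alpha>0$, $\varepsilon>0$, and let $\delta_1$ satisfy $0<\delta_1<\big(2+\frac{1}{\alpha+\varepsilon}\big)^{-1}$. Put $s=\frac{\alpha+\varepsilon}{2(\alpha+\varepsilon)+1}+\delta_1$. Then there exists $N=N(\alpha,\varepsilon,\delta_1)\in\mathbb N$ such that for every $n\ge N$ and every $\mathbf b\in\mathbb N_{\ge2}^n$, \[ \sum_{c\in\mathbb N,\ c\ge R_n(\mathbf b)}|K_{n+1}(\mathbf b c)|^s\le|K_n(\mathbf b)|^s . \]
   Context: Lüroth digits: for $x\in(0,1]$, $a_1(x)=[1/x]+1$, $\mathcal L(x)=[1/x]([1/x]+1)x-[1/x]$, $a_{n+1}(x)=a_1(\mathcal L^n(x))$. Cylinders: for $\mathbf b=(b_1,\dots,b_n)\in\mathbb N_{\ge2}^n$, $\mathcal C_n(\mathbf b)=\{x\in(0,1]: a_j(x)=b_j,\ 1\le j\le n\}$; $\mathbf b c=(b_1,\dots,b_n,c)$. For $\mathbf b\in\mathbb N_{\ge2}^n$, $Q_n(\mathbf b)=b_n\prod_{j=1}^{n-1}b_j(b_j-1)$, $R_n(\mathbf b)=Q_n(\mathbf b)^{1/(\alpha+\varepsilon)}$, and $K_n(\mathbf b)=\mathrm{Cl}\big(\bigcup\{\mathcal C_{n+1}(\mathbf b b_{n+1}): b_{n+1}\in\mathbb N,\ b_{n+1}\ge R_n(\mathbf b)\}\big)$ (a compact interval); $|\cdot|$ denotes diameter. *)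

From HB Require Import structures.
From mathcomp Require Import all_boot all_order all_algebra.
From mathcomp Require Import all_classical all_reals all_analysis.
Set Implicit Arguments. Unset Strict Implicit. Unset Printing Implicit Defensive.
Import Order.TTheory GRing.Theory Num.Theory.
Import numFieldNormedType.Exports.
Local Open Scope classical_set_scope.
Local Open Scope ring_scope.

Section Luroth.
Variable R : realType.

Definition luroth_a1 (x : R) : int := Num.floor (x^-1) + 1.

Definition luroth_L (x : R) : R :=
  let k : R := (Num.floor (x^-1))%:~R in k * (k + 1) * x - k.

(* a_{j+1}(x) = a_1(L^j x); digits of b are b_{j+1} = nth 0 b j *)
Definition cylinder (b : seq nat) : set R :=
  [set x | 0 < x <= 1 /\
     forall j : nat, (j < size b)%N ->
       luroth_a1 (iter j luroth_L x) = ((nth 0 b j)%N)%:Z].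

Definition Qn (b : seq nat) : nat :=
  (nth 0 b (size b).-1 *
   \prod_(j < (size b).-1) (nth 0 b j * (nth 0 b j).-1))%N.

Definition Rn (alpha eps : R) (b : seq nat) : R :=
  ((Qn b)%:R) `^ ((alpha + eps)^-1).

Definition Kn (alpha eps : R) (b : seq nat) : set R :=
  closure (\bigcup_(c in [set c : nat | Rn alpha eps b <= c%:R])
             cylinder (rcons b c)).

Definition diam (A : set R) : R :=
  sup [set `|p.1 - p.2| | p in A `*` A].

End Luroth.

From HB Require Import structures.
From mathcomp Require Import all_boot all_order all_algebra.
From mathcomp Require Import all_classical all_reals all_analysis.
From mathcomp Require Import ring lra zify.
Import Order.TTheory GRing.Theory Num.Theory.
Import numFieldNormedType.Exports.
Local Open Scope classical_set_scope.
Local Open Scope ring_scope.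

(* Write t = 1/(alpha+eps) and sigma = (2+t)s = 1 + (2+t) delta1 > 1.
   1. Geometry.  By induction on the digits, C_n(b) is the interval
      (l_b, l_b + lam_b] with lam_b = 1/P_b, P_b = prod_j b_j (b_j - 1), and
      x in C(b ++ b') iff x lies there and its affine rescaling lies in C(b').
      The digit-c intervals, c >= m, tile (0, 1/(m-1)], so K_n(b) is the
      closure of (l_b, l_b + lam_b/(m-1)] with m = ceil R_n(b), whence
      |K_n(b)| = 1/(P_b (m-1)).
   2. Terms.  As P_{bc} = P_b c (c-1) and R_{n+1}(bc) = (c Q)^t with Q <= P_b,
      |K_{n+1}(bc)|^s <= (4 P_b^{-(1+t)})^s c^{-sigma} once P_b^t >= 2.
   3. Tail.  By convexity of x |-> x^{1-sigma},
      sum_{c >= m} c^{-sigma} <= (m-1)^{1-sigma} / (sigma-1).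
   4. Comparison.  Since m - 1 < R_n(b) <= P_b^t, the resulting bound is at
      most (1/(P_b (m-1)))^s when P_b is large, and P_b >= 2^n. *)

Section Cylinders.
Context {R : realType}.

Lemma luroth_a1_iff (a : nat) (x : R) : (2 <= a)%N ->
  (0 < x <= 1 /\ luroth_a1 x = a%:Z) <-> (a%:R^-1 < x /\ x <= (a%:R - 1)^-1).
Proof.
move=> a2.
have a0 : (0 : R) < a%:R by rewrite ltr0n; lia.
have a10 : (0 : R) < a%:R - 1 by rewrite subr_gt0 ltr1n.
have a11 : (1 : R) <= a%:R - 1 by rewrite lerBrDr (ler_nat R 2 a).
have Ea : ((a%:Z - 1)%:~R : R) = a%:R - 1 by rewrite intrB.
rewrite /luroth_a1; split.
  move=> [/andP[x0 x1] H].
  have fl : Num.floor (x^-1) = a%:Z - 1 by rewrite -H addrK.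
  have := floor_itv (x^-1); rewrite fl Ea subrK => /andP[h1 h2].
  split; rewrite -(invrK x).
    by rewrite ltf_pV2 ?posrE ?invr_gt0.
  by rewrite lef_pV2 ?posrE ?invr_gt0.
move=> [h1 h2].
have x0 : 0 < x by apply: lt_trans h1; rewrite invr_gt0.
split.
  rewrite x0 /=; apply: (le_trans h2); rewrite invr_le1 //; exact: unitf_gt0.
suff -> : Num.floor (x^-1) = a%:Z - 1 by rewrite subrK.
apply: floor_def; rewrite Ea subrK; apply/andP; split.
  by rewrite -[_ - 1]invrK lef_pV2 ?posrE ?invr_gt0.
by rewrite -[a%:~R]invrK ltf_pV2 ?posrE ?invr_gt0.
Qed.

Lemma luroth_L_digit (a : nat) (x : R) : (2 <= a)%N -> luroth_a1 x = a%:Z ->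
  luroth_L x = a%:R * (a%:R - 1) * (x - a%:R^-1).
Proof.
move=> a2 H; have fl : Num.floor (x^-1) = a%:Z - 1 by rewrite -H addrK.
have a0 : (a%:R : R) != 0 by rewrite pnatr_eq0; lia.
by rewrite /luroth_L fl intrB /= subrK; field.
Qed.

Lemma luroth_L_range (a : nat) (x : R) : (2 <= a)%N ->
  a%:R^-1 < x -> x <= (a%:R - 1)^-1 ->
  0 < a%:R * (a%:R - 1) * (x - a%:R^-1) <= 1.
Proof.
move=> a2 h1 h2.
have a0 : (0 : R) < a%:R by rewrite ltr0n; lia.
have a10 : (0 : R) < a%:R - 1 by rewrite subr_gt0 ltr1n.
apply/andP; split; first by rewrite !mulr_gt0 // subr_gt0.
rewrite -[leRHS](_ : a%:R * (a%:R - 1) * ((a%:R - 1)^-1 - a%:R^-1) = 1); last first.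
  by field; apply/andP; split; rewrite lt0r_neq0.
by rewrite ler_wpM2l ?lerD2r // mulr_ge0 // ltW.
Qed.

Lemma cylinder_cons (a : nat) (b : seq nat) (x : R) : (2 <= a)%N ->
  cylinder (a :: b) x <-> (a%:R^-1 < x /\ x <= (a%:R - 1)^-1) /\
     cylinder b (a%:R * (a%:R - 1) * (x - a%:R^-1)).
Proof.
move=> a2; rewrite /cylinder /=; split.
  move=> [x01 H]; have h0 := H 0%N isT.
  have [h1 h2] := (luroth_a1_iff a x a2).1 (conj x01 h0).
  split=> //; split; first exact: luroth_L_range.
  by move=> j jb; rewrite -(luroth_L_digit _ _ a2 h0) -iterSr; exact: (H j.+1).
move=> [[h1 h2] [_ H]].
have [x01 h0] := (luroth_a1_iff a x a2).2 (conj h1 h2).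
split=> //; case=> [|j] /= jb; first exact: h0.
by rewrite -iterS iterSr (luroth_L_digit _ _ a2 h0); exact: H.
Qed.

(* Left endpoint and length of the cylinder interval of b. *)
Fixpoint cyl_left (b : seq nat) : R :=
  if b is a :: b' then a%:R^-1 + cyl_left b' / (a%:R * (a%:R - 1)) else 0.
Fixpoint cyl_len (b : seq nat) : R :=
  if b is a :: b' then cyl_len b' / (a%:R * (a%:R - 1)) else 1.

Lemma ler_affine (k a c x : R) : 0 < k -> (k * (x - a) <= c) = (x <= a + c / k).
Proof. by move=> k0; rewrite -lerBlDl ler_pdivlMr // mulrC. Qed.

Lemma ltr_affine (k a c x : R) : 0 < k -> (c < k * (x - a)) = (a + c / k < x).
Proof. by move=> k0; rewrite -ltrBrDl ltr_pdivrMr // mulrC. Qed.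

Lemma digit_slope_gt0 {a : nat} : (2 <= a)%N -> (0 : R) < a%:R * (a%:R - 1).
Proof. by move=> a2; rewrite mulr_gt0 // ?subr_gt0 ?ltr1n ?ltr0n //; lia. Qed.

Lemma digit_itv_len {a : nat} : (2 <= a)%N ->
  a%:R^-1 + (a%:R * (a%:R - 1))^-1 = ((a%:R - 1)^-1 : R).
Proof.
move=> a2.
have a0 : (a%:R : R) != 0 by rewrite pnatr_eq0; lia.
have a10 : (a%:R - 1 : R) != 0 by rewrite subr_eq0 pnatr_eq1; lia.
by field; rewrite a0 a10.
Qed.

Lemma cyl_itv_bounds {b : seq nat} : all (fun k => 2 <= k)%N b ->
  0 <= cyl_left b /\ 0 < cyl_len b /\ cyl_left b + cyl_len b <= 1.
Proof.
elim: b => [|a b IH] /=; first by rewrite lexx ltr01 add0r lexx.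
move=> /andP[a2 /IH [h1 [h2 h3]]].
have k0 := digit_slope_gt0 a2.
have a11 : (1 : R) <= a%:R - 1 by rewrite lerBrDr (ler_nat R 2 a).
split; first by rewrite addr_ge0 // divr_ge0 // ltW.
split; first by rewrite divr_gt0.
rewrite -addrA -mulrDl; apply: (le_trans _ (_ : (a%:R - 1)^-1 <= 1)).
  rewrite -digit_itv_len // lerD2l -[X in _ <= X]mul1r.
  by rewrite ler_wpM2r // invr_ge0 ltW.
by rewrite invr_le1 // ?unitf_gt0 // (lt_le_trans ltr01).
Qed.

Lemma cylinder_cat (b b' : seq nat) (x : R) : all (fun k => 2 <= k)%N b ->
  cylinder (b ++ b') x <->
  (cyl_left b < x /\ x <= cyl_left b + cyl_len b) /\
    cylinder b' ((x - cyl_left b) / cyl_len b).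
Proof.
elim: b x => [|a b IH] x /=.
  move=> _; rewrite subr0 divr1 add0r; split; last by case.
  by move=> H; split=> //; case: H => /andP[].
move=> /andP[a2 ball].
have k0 := digit_slope_gt0 a2.
have [h1 [h2 h3]] := cyl_itv_bounds ball.
rewrite (cylinder_cons _ _ _ a2) (IH _ ball).
set k := a%:R * (a%:R - 1).
rewrite ltr_affine // ler_affine //.
have E (ia : R) : (k * (x - ia) - cyl_left b) / cyl_len b =
                   (x - (ia + cyl_left b / k)) / (cyl_len b / k).
  have kk : 0 < k := k0; clearbody k.
  by field; rewrite !lt0r_neq0.
rewrite E mulrDl addrA.
split; first by move=> [_ [H1 H2]].
move=> [[H1 H2] H3]; split=> //; split.
  by apply: le_lt_trans H1; rewrite lerDl divr_ge0 // ltW.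
apply: (le_trans H2); rewrite -digit_itv_len // -addrA -mulrDl lerD2l.
by rewrite -[X in _ <= X]mul1r ler_wpM2r // ?invr_ge0 ?ltW // (le_trans _ h3) // lerDl ltW.
Qed.

Lemma cylinder1 (c : nat) (y : R) : (2 <= c)%N ->
  cylinder [:: c] y <-> (c%:R^-1 < y /\ y <= (c%:R - 1)^-1).
Proof.
move=> c2; rewrite cylinder_cons //; split; first by case.
by move=> [h1 h2]; split=> //; split; [exact: luroth_L_range | move=> j].
Qed.

Lemma digit_itv_tail (m : nat) (y : R) : (2 <= m)%N ->
  (exists c : nat, (m <= c)%N /\ c%:R^-1 < y /\ y <= (c%:R - 1)^-1) <->
  (0 < y /\ y <= (m%:R - 1)^-1).
Proof.
move=> m2.
have m10 : (0 : R) < m%:R - 1 by rewrite subr_gt0 ltr1n.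
split.
  move=> [c [mc [h1 h2]]].
  have c0 : (0 : R) < c%:R by rewrite ltr0n; lia.
  have c10 : (0 : R) < c%:R - 1 by rewrite subr_gt0 ltr1n; lia.
  split; first by apply: lt_trans h1; rewrite invr_gt0.
  by apply: (le_trans h2); rewrite lef_pV2 ?posrE // lerD2r ler_nat.
move=> [y0 h].
have yi0 : 0 < y^-1 by rewrite invr_gt0.
set k := Num.truncn (y^-1).
have [t1 t2] : k%:R <= y^-1 /\ y^-1 < k.+1%:R.
  by apply/andP; apply: truncn_itv; rewrite ltW.
have mk : (m.-1 <= k)%N.
  rewrite truncn_ge_nat; last exact: ltW.
  rewrite -(@invrK _ y) -[_%:R]invrK lef_pV2 ?posrE ?invr_gt0 //.
    by rewrite invrK -subn1 natrB // ltnW.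
  by rewrite ltr0n; lia.
exists k.+1; split; first lia.
split; first by rewrite -[X in _ < X]invrK ltf_pV2 ?posrE ?invr_gt0.
rewrite -natr1 addrK -[X in X <= _]invrK lef_pV2 ?posrE ?invr_gt0 //.
by rewrite ltr0n; lia.
Qed.

Lemma nat_ceil_spec {r : R} : 1 < r ->
  exists m : nat, (2 <= m)%N /\ m%:R - 1 < r /\
    forall c : nat, (r <= c%:R) <-> (m <= c)%N.
Proof.
move=> r1.
have cg : 1 < Num.ceil r by rewrite real_ceil_gt_int ?num_real.
have [m Em] : exists m : nat, Num.ceil r = m%:Z.
  by exists `|Num.ceil r|%N; rewrite gez0_abs // ltW // (lt_trans _ cg).
exists m; split; first by rewrite Em in cg; lia.
split; first by have := real_ceilB1_lt (num_real r); rewrite Em intrB.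
by move=> c; rewrite -(@real_ceil_le_int _ r c) ?num_real // Em lez_nat.
Qed.

Lemma cylinder_tail_union {b : seq nat} {r : R} {m : nat} :
  all (fun k => 2 <= k)%N b -> (2 <= m)%N ->
  (forall c : nat, (r <= c%:R) <-> (m <= c)%N) ->
  \bigcup_(c in [set c : nat | r <= c%:R]) cylinder (rcons b c) =
  [set x | cyl_left b < x <= cyl_left b + cyl_len b / (m%:R - 1)].
Proof.
move=> ball m2 Hc.
have [h1 [h2 h3]] := cyl_itv_bounds ball.
have m10 : (0 : R) < m%:R - 1 by rewrite subr_gt0 ltr1n.
have rescale x : ((x - cyl_left b) / cyl_len b <= (m%:R - 1)^-1) =
                 (x <= cyl_left b + cyl_len b / (m%:R - 1)).
  by rewrite ler_pdivrMr // -lerBlDl mulrC.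
apply/seteqP; split=> x /=.
  move=> [c /= /Hc mc]; rewrite -cats1 cylinder_cat // => -[[x1 x2]].
  rewrite cylinder1; last by lia.
  move=> hc; have [_ y2] := (digit_itv_tail m _ m2).1 (ex_intro _ c (conj mc hc)).
  by rewrite x1 -rescale.
move=> /andP[x1 x2].
have [c [mc hc]] : exists c : nat, (m <= c)%N /\
    c%:R^-1 < (x - cyl_left b) / cyl_len b /\
    (x - cyl_left b) / cyl_len b <= (c%:R - 1)^-1.
  apply/(digit_itv_tail m _ m2); split; last by rewrite rescale.
  by rewrite divr_gt0 // subr_gt0.
exists c; first exact/Hc.
rewrite -cats1 cylinder_cat //; split; last by rewrite cylinder1 //; lia.
split=> //; apply: (le_trans x2); rewrite lerD2l ler_pdivrMr //.
by rewrite ler_peMr ?(ltW h2) // lerBrDr (ler_nat R 2 m).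
Qed.

Lemma diam_closure_itv (u v : R) : u < v ->
  diam (closure [set x | u < x <= v]) = v - u.
Proof.
move=> uv; set A := [set x | u < x <= v].
set D := [set `|p.1 - p.2| | p in closure A `*` closure A].
have AB : closure A `<=` `[u, v].
  rewrite ((closure_id _).1 (@itv_closed _ _ u v)); apply: closureS.
  by move=> x /= /andP[h1 h2]; rewrite in_itv /= h2 ltW.
have vA : closure A v by apply: subset_closure; rewrite /A /= uv lexx.
have ub : ubound D (v - u).
  move=> r [[p q] [/= pA qA] <-]; have := AB _ pA; have := AB _ qA.
  rewrite /= !in_itv /= => /andP[q1 q2] /andP[p1 p2].
  rewrite ler_norml; apply/andP; split; lra.
have hs : has_ubound D by exists (v - u).
apply/eqP; rewrite eq_le; apply/andP; split.
  by apply: ge_sup => //; exists 0, (v, v); rewrite /= ?subrr ?normr0.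
apply/ler_addgt0Pr => e e0.
have [ev|ev] := leP (v - u) e.
  apply: (le_trans ev); rewrite lerDr.
  by apply: (ub_le_sup hs); exists (v, v); rewrite /= ?subrr ?normr0.
rewrite -lerBlDr; apply: (ub_le_sup hs); exists (v, u + e).
  by split=> //; apply: subset_closure; rewrite /A /= ltrDl e0 /=; lra.
by rewrite /= ger0_norm; lra.
Qed.

End Cylinders.

(* P_b = prod_j b_j (b_j - 1), the reciprocal of the length of C_n(b). *)
Definition digit_prod (b : seq nat) : nat :=
  \prod_(j < size b) (nth 0 b j * (nth 0 b j).-1).

Lemma digit_prod_cons (a : nat) (b : seq nat) :
  digit_prod (a :: b) = (a * a.-1 * digit_prod b)%N.
Proof. by rewrite /digit_prod /= big_ord_recl. Qed.

Lemma digit_prod_rcons (b : seq nat) (c : nat) :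
  digit_prod (rcons b c) = (digit_prod b * (c * c.-1))%N.
Proof.
rewrite /digit_prod size_rcons big_ord_recr /= nth_rcons ltnn eqxx.
by congr (_ * _)%N; apply: eq_bigr => i _; rewrite /= nth_rcons ltn_ord.
Qed.

Lemma Qn_rcons (b : seq nat) (c : nat) : Qn (rcons b c) = (c * digit_prod b)%N.
Proof.
rewrite /Qn size_rcons /= nth_rcons ltnn eqxx.
by congr (_ * _)%N; apply: eq_bigr => i _; rewrite /= nth_rcons ltn_ord.
Qed.

Lemma cyl_len_digit_prod {R : realType} (b : seq nat) :
  all (fun k => 2 <= k)%N b -> cyl_len b = ((digit_prod b)%:R : R)^-1.
Proof.
elim: b => [|a b IH] /=; first by rewrite /digit_prod big_ord0 invr1.
move=> /andP[a2 /IH ->]; rewrite digit_prod_cons -subn1 !natrM natrB; last lia.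
by rewrite [in RHS]invfM mulrC.
Qed.

Lemma digit_prod_ge {b : seq nat} :
  all (fun k => 2 <= k)%N b -> (2 ^ size b <= digit_prod b)%N.
Proof.
elim: b => [|a b IH] /=; first by rewrite /digit_prod big_ord0.
move=> /andP[a2 /IH h]; rewrite digit_prod_cons expnS.
by apply: leq_mul => //; apply: (@leq_trans (2 * 1)) => //; apply: leq_mul; lia.
Qed.

Lemma Qn_bounds {b : seq nat} : all (fun k => 2 <= k)%N b -> b != [::] ->
  (2 <= Qn b)%N /\ (Qn b <= digit_prod b)%N.
Proof.
case/lastP: b => [|b d] //; rewrite all_rcons => /andP[d2 ball] _.
have := digit_prod_ge ball; rewrite Qn_rcons digit_prod_rcons => h.
have P1 : (1 <= digit_prod b)%N by apply: leq_trans h; rewrite expn_gt0.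
by split; nia.
Qed.

Lemma diam_Kn {R : realType} {alpha eps : R} {b : seq nat} {m : nat} :
  all (fun k => 2 <= k)%N b -> (2 <= m)%N ->
  (forall c : nat, (Rn alpha eps b <= c%:R) <-> (m <= c)%N) ->
  diam (Kn alpha eps b) = ((digit_prod b)%:R)^-1 / (m%:R - 1).
Proof.
move=> ball m2 Hc.
have [_ [len0 _]] := cyl_itv_bounds (R := R) ball.
rewrite /Kn (cylinder_tail_union ball m2 Hc) diam_closure_itv.
  by rewrite addrC addKr cyl_len_digit_prod.
by rewrite ltrDl divr_gt0 // subr_gt0 ltr1n.
Qed.

Section PowerEstimates.
Context {R : realType}.

(* Convexity of x |-> x^{1-sg}: the term c^{-sg} is dominated by a telescoping
   difference, (sg - 1) c^{-sg} <= (c-1)^{1-sg} - c^{1-sg}. *)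
Lemma powR_telescope_step (sg c : R) : 1 < sg -> 1 < c ->
  (sg - 1) * c `^ (- sg) <= (c - 1) `^ (1 - sg) - c `^ (1 - sg).
Proof.
move=> s1 c1.
have c0 : 0 < c by apply: lt_trans c1.
have ci1 : c^-1 < 1 by rewrite invf_lt1.
have ci0 : 0 < c^-1 by rewrite invr_gt0.
have y0 : 0 < 1 - c^-1 by rewrite subr_gt0.
have E1 : (c - 1) `^ (1 - sg) = c `^ (1 - sg) * (1 - c^-1) `^ (1 - sg).
  by rewrite -powRM ?ltW //; congr (_ `^ _); field; exact: lt0r_neq0.
have E2 : c `^ (1 - sg) = c `^ (- sg) * c.
  by rewrite addrC powRD ?powRr1 ?ltW // (gt_eqF c0) implybT.
(* Bernoulli-type bound (1 - 1/c)^{1-sg} >= 1 + (sg-1)/c, via exp and ln. *)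
have bernoulli : 1 + (sg - 1) / c <= (1 - c^-1) `^ (1 - sg).
  rewrite /powR gt_eqF //; apply: le_trans (expR_ge1Dx _).
  rewrite lerD2l.
  have hl : ln (1 - c^-1) <= - c^-1 by apply: le_ln1Dx; rewrite ltrN2.
  have : (1 - sg) * (- c^-1) <= (1 - sg) * ln (1 - c^-1).
    by apply: ler_wnM2l => //; rewrite subr_le0 ltW.
  by apply: le_trans; rewrite mulrN -mulNr opprB.
rewrite E1 E2.
set p := c `^ (- sg); set y := (1 - c^-1) `^ (1 - sg).
have p0 : 0 < p by apply: powR_gt0.
have H : 0 <= p * c * (y - (1 + (sg - 1) / c)).
  by rewrite mulr_ge0 ?subr_ge0 // mulr_ge0 // ltW.
have Eq : p * c * ((sg - 1) / c) = (sg - 1) * p by field; exact: lt0r_neq0.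
by move: H; rewrite !mulrDr !mulrN !mulrDr Eq mulr1; lra.
Qed.

Lemma telescope_from (g : R -> R) (m K : nat) :
  \sum_(0 <= k < K) (if (m <= k)%N then g (k.-1)%:R - g k%:R else 0) =
  g (m.-1)%:R - g ((maxn K m).-1)%:R.
Proof.
elim: K => [|K IH]; first by rewrite big_geq // max0n subrr.
rewrite big_nat_recr //= IH.
case: (leqP m K) => h; last by rewrite addr0 (maxn_idPr h).
by rewrite (maxn_idPl (leq_trans h (leqnSn K))) /= addrA subrK.
Qed.

Lemma tail_series_bound {f : nat -> R} {r A sg : R} {m : nat} :
  (2 <= m)%N -> 1 < sg -> 0 <= A ->
  (forall c : nat, (r <= c%:R) <-> (m <= c)%N) -> (forall c, 0 <= f c) ->
  (forall c : nat, (m <= c)%N -> f c <= A * (c%:R `^ (- sg))) ->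
  (\sum_(c <oo | (r <= c%:R)%R) (f c)%:E <=
     (A / (sg - 1) * (m%:R - 1) `^ (1 - sg))%:E)%E.
Proof.
move=> m2 s1 A0 Hc f0 fb.
have Hb c : (r <= c%:R) = (m <= c)%N by apply/idP/idP => /Hc.
have s10 : 0 < sg - 1 by rewrite subr_gt0.
apply: lime_le; first by apply: is_cvg_nneseries => n _ _; rewrite lee_fin.
apply: nearW => K; rewrite sumEFin lee_fin.
set g := fun x : R => x `^ (1 - sg).
apply: (@le_trans _ _
  (\sum_(0 <= k < K | r <= k%:R) (A / (sg - 1) * (g (k.-1)%:R - g k%:R)))).
  apply: ler_sum => k; rewrite Hb => mk.
  apply: (le_trans (fb _ mk)); rewrite -mulrA ler_wpM2l //.
  have -> : (k.-1)%:R = (k%:R - 1 : R) by rewrite -subn1 natrB //; lia.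
  rewrite ler_pdivlMl // /g; apply: powR_telescope_step => //.
  by rewrite ltr1n; lia.
rewrite -mulr_sumr; apply: ler_wpM2l; first by rewrite divr_ge0 // ltW.
rewrite (eq_bigl (fun k => (m <= k)%N)); last by move=> k; rewrite Hb.
rewrite big_mkcond /= telescope_from -subn1 natrB; last lia.
by rewrite lerBlDr lerDl; exact: powR_ge0.
Qed.

Lemma powR_eventually_ge (C : R) {g : R} : 0 < g ->
  exists N : nat, forall P : R, N%:R <= P -> C <= P `^ g.
Proof.
move=> g0; set X := (Num.max C 1) `^ g^-1.
exists (Num.truncn X).+1 => P hP.
have X0 : 0 <= X := powR_ge0 _ _.
have XP : X <= P by apply: le_trans (ltW (truncnS_gt X)) hP.
have m1 : 1 <= Num.max C 1 by rewrite le_max lexx orbT.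
have EX : X `^ g = Num.max C 1.
  by rewrite /X -powRrM mulVf ?powRr1 ?(le_trans ler01 m1) // lt0r_neq0.
apply: (@le_trans _ _ (X `^ g)); first by rewrite EX le_max lexx.
by apply: ge0_ler_powR; rewrite ?nnegrE ?(ltW g0) ?X0 ?(le_trans X0 XP) ?XP.
Qed.

Lemma child_term_bound (t s : R) (P c m : nat) : 0 < t -> 0 < s -> (2 <= c)%N ->
  (1 <= P)%N -> 2 <= (P%:R : R) `^ t -> ((c * P)%:R : R) `^ t <= m%:R ->
  (((P * (c * c.-1))%:R : R)^-1 / (m%:R - 1)) `^ s <=
    (4 * (P%:R : R) `^ (-(1 + t))) `^ s * (c%:R : R) `^ (- ((2 + t) * s)).
Proof.
move=> t0 s0 c2 P1 Pt Rc.
set p : R := P%:R; set x : R := c%:R; set mr : R := m%:R.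
have p1 : 1 <= p by rewrite /p ler1n.
have x2 : 2 <= x by rewrite /x (ler_nat R 2 c).
have p0 : 0 < p by apply: lt_le_trans p1.
have x0 : 0 < x by apply: lt_le_trans x2.
have a1 : 1 <= x `^ t.
  by rewrite -(powRr0 x); apply: ler_powR; [lra | exact: ltW].
set a := x `^ t; set q := p `^ t.
have aqm : a * q <= mr by move: Rc; rewrite natrM powRM ?ler0n.
have aq2 : 2 <= a * q by have := ler_pM ler01 (ler0n R 2) a1 Pt; rewrite mul1r.
have m0 : 0 < mr - 1 by lra.
rewrite -mulNr powRrM -powRM ?powR_ge0 //; last by rewrite mulr_ge0 // powR_ge0.
apply: ge0_ler_powR; first exact: ltW.
- by rewrite nnegrE divr_ge0 // ?invr_ge0 // ltW.
- by rewrite nnegrE mulr_ge0 ?powR_ge0 // mulr_ge0 // powR_ge0.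
have q0 : 0 < q by apply: powR_gt0.
have a0 : 0 < a by apply: lt_le_trans a1.
have x10 : 0 < x - 1 by lra.
have L0 : 0 < p * (x * (x - 1)) * (mr - 1).
  exact: (mulr_gt0 (mulr_gt0 p0 (mulr_gt0 x0 x10)) m0).
have R0 : 0 < p * q * (x ^+ 2 * a) / 4.
  exact: divr_gt0 (mulr_gt0 (mulr_gt0 p0 q0) (mulr_gt0 (exprn_gt0 2 x0) a0)) _.
have E1 : ((P * (c * c.-1))%:R : R)^-1 / (mr - 1) =
          (p * (x * (x - 1)) * (mr - 1))^-1.
  by rewrite -subn1 !natrM (natrB _ (ltnW c2)) [RHS]invfM.
have Ep : p `^ (1 + t) = p * q by rewrite powRD ?powRr1 ?ltW // (gt_eqF p0) implybT.
have Ex : x `^ (2 + t) = x ^+ 2 * a.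
  by rewrite powRD ?powR_mulrn ?ltW // (gt_eqF x0) implybT.
have E2 : 4 * p `^ (- (1 + t)) * x `^ (- (2 + t)) = (p * q * (x ^+ 2 * a) / 4)^-1.
  by rewrite !powRN Ep Ex; field; rewrite !lt0r_neq0 // ?exprn_gt0.
rewrite E1 E2 lef_pV2 ?posrE //.
have h1 : x ^+ 2 / 2 <= x * (x - 1).
  have : 0 <= x * (x - 2) by rewrite mulr_ge0 ?subr_ge0 // ltW.
  by rewrite expr2; lra.
have h2 : a * q / 2 <= mr - 1 by lra.
have h3 := ler_pM (divr_ge0 (exprn_ge0 2 (ltW x0)) (ler0n R 2))
  (divr_ge0 (le_trans (ler0n R 2) aq2) (ler0n R 2)) h1 h2.
have -> : p * q * (x ^+ 2 * a) / 4 = p * (x ^+ 2 / 2 * (a * q / 2)) by field.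
by apply: (le_trans (ler_wpM2l (ltW p0) h3)); rewrite !mulrA.
Qed.

(* Final comparison: with D = m - 1 <= P^t and P large,
   (4 P^{-(1+t)})^s D^{1-sg} / (sg-1) <= (1/(P D))^s, where sg = (2+t)s.
   Taking logarithms it becomes linear in ln P and ln D. *)
Lemma tail_le_parent (P D t s sg : R) : 1 <= P -> 1 <= D -> D <= P `^ t ->
  0 < t -> 0 < s -> 1 < sg -> sg = (2 + t) * s ->
  4 `^ s / (sg - 1) <= P `^ (t * s) -> 4 `^ s / (sg - 1) <= P `^ (t * (sg - 1)) ->
  (4 * P `^ (-(1 + t))) `^ s / (sg - 1) * D `^ (1 - sg) <= (P^-1 / D) `^ s.
Proof.
move=> P1 D1 DP t0 s0 s1 Es H1 H2.
have P0 : 0 < P by apply: lt_le_trans P1.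
have D0 : 0 < D by apply: lt_le_trans D1.
have sg0 : 0 < sg - 1 by rewrite subr_gt0.
have isg0 : 0 < (sg - 1)^-1 by rewrite invr_gt0.
have PD0 : 0 < P^-1 / D by rewrite divr_gt0 ?invr_gt0.
have q0 : 0 < 4 * P `^ (-(1 + t)) by rewrite mulr_gt0 // powR_gt0.
set k := s * ln 4 - ln (sg - 1); set L := ln P; set d := ln D.
have lnC : ln (4 `^ s / (sg - 1)) = k.
  by rewrite ln_div ?posrE ?powR_gt0 // ln_powR.
have Hk1 : k <= t * s * L.
  by rewrite -lnC -(ln_powR P (t * s)) ler_ln ?posrE ?powR_gt0 ?divr_gt0.
have Hk2 : k <= t * (sg - 1) * L.
  by rewrite -lnC -(ln_powR P (t * (sg - 1))) ler_ln ?posrE ?powR_gt0 ?divr_gt0.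
have d0 : 0 <= d by apply: ln_ge0.
have dL : d <= t * L by rewrite -(ln_powR P t) ler_ln ?posrE ?powR_gt0.
rewrite -ler_ln ?posrE ?mulr_gt0 ?powR_gt0 //.
rewrite lnM ?posrE ?divr_gt0 ?powR_gt0 // ln_div ?posrE ?powR_gt0 //.
rewrite !ln_powR lnM ?posrE ?powR_gt0 //.
rewrite ln_div ?posrE ?invr_gt0 // lnV ?posrE // ln_powR -/L -/d.
suff : k + (1 - sg + s) * d <= t * s * L by rewrite /k; lra.
have [e0|e0] := leP (1 - sg + s) 0.
  have : (1 - sg + s) * d <= 0 by rewrite mulr_le0_ge0.
  lra.
have : (1 - sg + s) * d <= (1 - sg + s) * (t * L) by rewrite ler_wpM2l // ltW.
have Eq : t * s * L = t * (sg - 1) * L + (1 - sg + s) * (t * L) by ring.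
lra.
Qed.

End PowerEstimates.

(* The size conditions on P = P_b under which the estimate closes
   (sg = (2+t)s is the decay exponent of the child terms). *)
Definition large_prod {R : realType} (t s P : R) : Prop :=
  [/\ 2 <= P `^ t, 4 `^ s / ((2 + t) * s - 1) <= P `^ (t * s)
    & 4 `^ s / ((2 + t) * s - 1) <= P `^ (t * ((2 + t) * s - 1))].

Lemma large_prod_eventually {R : realType} {t s : R} :
  0 < t -> 0 < s -> 1 < (2 + t) * s ->
  exists N : nat, forall P : nat, (N <= P)%N -> large_prod t s P%:R.
Proof.
move=> t0 s0 sg1; set C := 4 `^ s / ((2 + t) * s - 1).
have sg0 : 0 < (2 + t) * s - 1 by rewrite subr_gt0.
have [N1 H1] := powR_eventually_ge C (mulr_gt0 t0 s0).
have [N2 H2] := powR_eventually_ge C (mulr_gt0 t0 sg0).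
have [N3 H3] := powR_eventually_ge 2 t0.
exists (maxn N1 (maxn N2 N3)) => P NP.
by split; [apply: H3 | apply: H1 | apply: H2]; rewrite ler_nat; lia.
Qed.

Section KnEstimates.
Context {R : realType} {alpha eps s : R}.
Hypotheses (u_gt0 : 0 < alpha + eps) (s_gt0 : 0 < s).
Let t := (alpha + eps)^-1.
Let t_gt0 : 0 < t. Proof. by rewrite invr_gt0. Qed.

Lemma Rn_gt1 {b : seq nat} : (1 < Qn b)%N -> 1 < Rn alpha eps b.
Proof.
move=> Q1; have := gt0_ltr_powR t_gt0 (x := 1) (y := (Qn b)%:R).
by rewrite powR1; apply; rewrite ?nnegrE ?ler01 ?ler0n ?ltr1n.
Qed.

Lemma child_diam_bound {b : seq nat} {c : nat} :
  all (fun k => 2 <= k)%N b -> (2 <= c)%N -> 2 <= ((digit_prod b)%:R : R) `^ t ->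
  diam (Kn alpha eps (rcons b c)) `^ s <=
    (4 * ((digit_prod b)%:R : R) `^ (- (1 + t))) `^ s * c%:R `^ (- ((2 + t) * s)).
Proof.
move=> ball c2 P2.
have bc : all (fun k => 2 <= k)%N (rcons b c) by rewrite all_rcons c2 ball.
have P1 : (1 <= digit_prod b)%N.
  by apply: leq_trans (digit_prod_ge ball); rewrite expn_gt0.
have ERc : Rn alpha eps (rcons b c) = ((c * digit_prod b)%:R) `^ t.
  by rewrite /Rn Qn_rcons.
have [m [m2 [_ Hm]]] : exists m : nat, (2 <= m)%N /\ m%:R - 1 < Rn alpha eps (rcons b c)
    /\ forall c' : nat, (Rn alpha eps (rcons b c) <= c'%:R) <-> (m <= c')%N.
  by apply: nat_ceil_spec; apply: Rn_gt1; rewrite Qn_rcons; nia.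
rewrite (diam_Kn bc m2 Hm) digit_prod_rcons.
by apply: child_term_bound => //; rewrite -ERc; apply/Hm.
Qed.

Lemma Kn_sum_le {b : seq nat} :
  1 < (2 + t) * s -> all (fun k => 2 <= k)%N b -> b != [::] ->
  large_prod t s (digit_prod b)%:R ->
  (\sum_(c <oo | (Rn alpha eps b <= c%:R)%R)
      ((diam (Kn alpha eps (rcons b c))) `^ s)%:E <=
    ((diam (Kn alpha eps b)) `^ s)%:E)%E.
Proof.
move=> sg1 ball b0 [P2 PC1 PC2].
have [Q2 QP] := Qn_bounds ball b0.
have [m [m2 [mR Hm]]] := nat_ceil_spec (Rn_gt1 Q2).
rewrite (diam_Kn ball m2 Hm).
apply: le_trans.
  apply: (tail_series_bound m2 sg1 (powR_ge0 _ _) Hm) => [c|c mc].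
    exact: powR_ge0.
  exact: child_diam_bound ball (leq_trans m2 mc) P2.
rewrite lee_fin; apply: tail_le_parent => //.
- by rewrite ler1n (leq_trans (ltnW Q2) QP).
- by rewrite lerBrDr (ler_nat R 2 m).
- apply: (le_trans (ltW mR)); rewrite /Rn.
  by apply: ge0_ler_powR; rewrite ?nnegrE ?ler0n ?ler_nat // ltW.
Qed.

End KnEstimates.

Lemma exponent_spec {R : realType} {u d : R} : 0 < u -> 0 < d ->
  0 < u / (2 * u + 1) + d /\ 1 < (2 + u^-1) * (u / (2 * u + 1) + d).
Proof.
move=> u0 d0; have v0 : 0 < 2 * u + 1 by rewrite addr_gt0 // mulr_gt0.
have E : (2 + u^-1) * (u / (2 * u + 1)) = 1 by field; rewrite !lt0r_neq0.
split; first by rewrite addr_gt0 // divr_gt0.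
by rewrite mulrDr E ltrDl mulr_gt0 // addr_gt0 // invr_gt0.
Qed.

Theorem mainTheorem7 (R : realType) (alpha eps delta1 : R) :
  0 < alpha -> 0 < eps ->
  0 < delta1 -> delta1 < (2 + (alpha + eps)^-1)^-1 ->
  let s := (alpha + eps) / (2 * (alpha + eps) + 1) + delta1 in
  exists N : nat, (1 <= N)%N /\
    forall (n : nat) (b : seq nat),
      (N <= n)%N -> size b = n -> all (fun k => 2 <= k)%N b ->
      (\sum_(c <oo | (Rn alpha eps b <= c%:R)%R)
          ((diam (Kn alpha eps (rcons b c))) `^ s)%R%:E <=
        ((diam (Kn alpha eps b)) `^ s)%R%:E)%E.
Proof.
move=> a0 e0 d0 _ s.
have u0 : 0 < alpha + eps by rewrite addr_gt0.
have [s0 sg1] := exponent_spec u0 d0.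
have t0 : 0 < (alpha + eps)^-1 by rewrite invr_gt0.
have [N HN] := large_prod_eventually t0 s0 sg1.
exists N.+1; split=> // n b Nn sb ball.
have b0 : b != [::] by rewrite -size_eq0 sb -lt0n (leq_trans _ Nn).
apply: (Kn_sum_le u0 s0 sg1 ball b0); apply: HN.
have := digit_prod_ge ball; have := ltn_expl n (ltnSn 1); rewrite sb; lia.
Qed.
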